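(* There exist absolute constants $\varepsilon_0>0$ and $n_0$ such that for the population protocol USD with $n\ge n_0$ and every $t\ge1$: if $\beta_{t-1}\ge\frac12-\varepsilon_0$ and $\gamma_{t-1}\le\varepsilon_0$, then $$\mathbb E_{t-1}[\widetilde\gamma_t]\ge\widetilde\gamma_{t-1}+\frac{1}{12n^2}.$$
   Context: Vertex set $V$, $|V|=n$; opinions in $\Sigma=[k]\cup\{\bot\}$ ($\bot$ = undecided). USD update rule: $\mathsf{update}(\sigma_1,\sigma_2)=\bot$ if $\sigma_1,\sigma_2\in[k]$ and $\sigma_1\ne\sigma_2$; $=\sigma_2$ if $\sigma_1=\bot$; $=\sigma_1$ otherwise. Population protocol USD: given $\mathrm{opn}_t\in\Sigma^V$, an ordered pair $(u,v)$ is chosen uniformly from $V\times V$ (with replacement), $\mathrm{opn}_{t+1}(u)=\mathsf{update}(\mathrm{opn}_t(u),\mathrm{opn}_t(v))$, and all other vertices keep their opinions. Notation: $\alpha_t(i)=|\{u:\mathrm{opn}_t(u)=i\}|/n$, $\beta_t=\sum_{i\in[k]}\alpha_t(i)$, $\gamma_t=\sum_{i\in[k]}\alpha_t(i)^2$, $\widetilde\gamma_t=\gamma_t/\beta_t^2$ if $\beta_t>0$ and $\widetilde\gamma_t=0$ if $\beta_t=0$. $\mathbb E_{t-1}$ is conditional expectation given the natural filtration $\mathcal F_{t-1}$. *)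

From mathcomp Require Import all_boot all_order all_algebra.
From mathcomp Require Import reals.
Set Implicit Arguments. Unset Strict Implicit. Unset Printing Implicit Defensive.
Import Order.TTheory GRing.Theory Num.Theory.
Local Open Scope ring_scope.

(* Opinions: Sigma = [k] u {bot}, encoded as option 'I_k, None = undecided. *)
Definition update (k : nat) (s1 s2 : option 'I_k) : option 'I_k :=
  match s1, s2 with
  | Some i, Some j => if i == j then s1 else None
  | None, _ => s2
  | Some _, None => s1
  end.

Definition config (n k : nat) := {ffun 'I_n -> option 'I_k}.

Definition usd_step (n k : nat) (opn : config n k) (u v : 'I_n) : config n k :=
  [ffun w => if w == u then update (opn u) (opn v) else opn w].

Section Quantities.
Variable R : realType.

Definition alpha (n k : nat) (opn : config n k) (i : 'I_k) : R :=
  (#|[set u | opn u == Some i]|)%:R / n%:R.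

Definition beta (n k : nat) (opn : config n k) : R :=
  \sum_(i < k) alpha opn i.

Definition gamma (n k : nat) (opn : config n k) : R :=
  \sum_(i < k) alpha opn i ^+ 2.

Definition gtilde (n k : nat) (opn : config n k) : R :=
  if 0 < beta opn then gamma opn / beta opn ^+ 2 else 0.

(* E_{t-1}[f(opn_t)] when opn_{t-1} = opn: (u,v) uniform on V x V. *)
Definition cond_exp_next (n k : nat) (f : config n k -> R) (opn : config n k) : R :=
  (n%:R ^+ 2)^-1 * \sum_(u < n) \sum_(v < n) f (usd_step opn u v).

End Quantities.

(* Write x_i for the number of vertices with opinion i, b = sum x_i,
   g = sum x_i^2 and c = sum x_i^3, so that gtilde = g / b^2.  An interaction
   changes gtilde only if an undecided initiator adopts an opinion j (the
   count x_j grows by one), which increases gtilde in expectation as g <= b^2,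
   or if an initiator with opinion i meets a different opinion and becomes
   undecided (x_i drops by one).  Summed over the n^2 ordered pairs, the
   second kind of move contributes
     ((b^2 - g)(g + 1) - 2bg + 2c) / (b - 1)^2 - (b^2 - g) g / b^2,
   which by Cauchy-Schwarz (g^2 <= bc) is at least (b^2 - g)^2 / b^4 >= 1/4
   once g <= b^2 / 2; the hypotheses on beta and gamma guarantee this. *)

From mathcomp Require Import all_boot all_order all_algebra.
From mathcomp Require Import reals.
From mathcomp Require Import ring lra.
Import Order.TTheory GRing.Theory Num.Theory.
Local Open Scope ring_scope.
Set Implicit Arguments. Unset Strict Implicit. Unset Printing Implicit Defensive.

Lemma big_option (V : nmodType) (T : finType) (F : option T -> V) :
  \sum_(s : option T) F s = F None + \sum_(i : T) F (Some i).
Proof.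
rewrite (bigD1 None) //=; congr (_ + _).
rewrite (reindex_omap Some (fun x => x)) /=; last by case.
by apply: eq_bigl => i; rewrite eqxx.
Qed.

Section Occupancy.
Variable R : numDomainType.

Definition cnt (n k : nat) (opn : config n k) (s : option 'I_k) : R :=
  \sum_(u < n) (opn u == s)%:R.

Definition counts (n k : nat) (opn : config n k) (i : 'I_k) : R :=
  cnt opn (Some i).

Lemma card_cnt n k (opn : config n k) s :
  (#|[set u | opn u == s]|)%:R = cnt opn s.
Proof.
rewrite -sum1_card natr_sum /cnt big_mkcond /=; apply: eq_bigr => u _.
by rewrite inE; case: (opn u == s).
Qed.

Lemma sum_config_cnt n k (opn : config n k) (F : option 'I_k -> R) :
  \sum_(u < n) F (opn u) = \sum_s cnt opn s * F s.
Proof.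
transitivity (\sum_(u < n) \sum_s (opn u == s)%:R * F s).
  apply: eq_bigr => u _; rewrite (bigD1 (opn u)) //= eqxx mul1r big1 ?addr0 //.
  by move=> s /negbTE; rewrite eq_sym => ->; rewrite mul0r.
by rewrite exchange_big /=; apply: eq_bigr => s _; rewrite /cnt mulr_suml.
Qed.

Lemma sum_config2_cnt n k (opn : config n k)
    (F : option 'I_k -> option 'I_k -> R) :
  \sum_(u < n) \sum_(v < n) F (opn u) (opn v)
  = \sum_s1 \sum_s2 cnt opn s1 * cnt opn s2 * F s1 s2.
Proof.
rewrite (eq_bigr (fun u => \sum_s2 cnt opn s2 * F (opn u) s2)); last first.
  by move=> u _; exact: sum_config_cnt opn (F (opn u)).
rewrite (sum_config_cnt opn (fun s1 => \sum_s2 cnt opn s2 * F s1 s2)).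
apply: eq_bigr => s1 _.
by rewrite mulr_sumr; apply: eq_bigr => s2 _; rewrite mulrA.
Qed.

Lemma sum_cnt n k (opn : config n k) : \sum_s cnt opn s = n%:R.
Proof.
have := sum_config_cnt opn (fun _ => 1).
by rewrite sumr_const card_ord => ->; apply: eq_bigr => s _; rewrite mulr1.
Qed.

Lemma cnt_ge0 n k (opn : config n k) s : 0 <= cnt opn s.
Proof. by apply: sumr_ge0 => u _; rewrite ler0n. Qed.

Lemma cnt_usd_step n k (opn : config n k) u v s :
  cnt (usd_step opn u v) s =
  cnt opn s - (opn u == s)%:R + (update (opn u) (opn v) == s)%:R.
Proof.
rewrite /cnt (bigD1 u) //= [in RHS](bigD1 u) //= ffunE eqxx.
under eq_bigr => i /negbTE Hi do rewrite ffunE Hi.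
ring.
Qed.

End Occupancy.
Arguments cnt {R n k} opn s.
Arguments counts {R n k} opn i.

Section CollisionRatio.
Variables (R : realFieldType) (k : nat).
Implicit Types (x y : 'I_k -> R) (b g c : R).

Definition coll_ratio x : R :=
  if 0 < \sum_i x i then (\sum_i x i ^+ 2) / (\sum_i x i) ^+ 2 else 0.

Lemma eq_coll_ratio x y : x =1 y -> coll_ratio x = coll_ratio y.
Proof.
move=> E; rewrite /coll_ratio.
have -> : \sum_i x i = \sum_i y i by apply: eq_bigr => i _.
have -> : \sum_i x i ^+ 2 = \sum_i y i ^+ 2.
  by apply: eq_bigr => i _; rewrite E.
by [].
Qed.

Definition shift x (j : 'I_k) (d : R) : 'I_k -> R :=
  fun l => x l + d * (j == l)%:R.

Lemma sum_shift x j d : \sum_l shift x j d l = \sum_l x l + d.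
Proof.
rewrite big_split /=; congr (_ + _).
rewrite (bigD1 j) //= eqxx mulr1 big1 ?addr0 // => l.
by rewrite eq_sym => /negbTE ->; rewrite mulr0.
Qed.

Lemma sum_sqr_shift x j d :
  \sum_l shift x j d l ^+ 2 = \sum_l x l ^+ 2 + 2 * d * x j + d ^+ 2.
Proof.
have E l : shift x j d l ^+ 2 = x l ^+ 2 + (2 * d * x l + d ^+ 2) * (j == l)%:R.
  by rewrite /shift; case: (j == l); rewrite /= ?mulr1 ?mulr0; ring.
rewrite (eq_bigr _ (fun l _ => E l)) big_split /= -addrA; congr (_ + _).
rewrite (bigD1 j) //= eqxx mulr1 big1 ?addr0 // => l.
by rewrite eq_sym => /negbTE ->; rewrite mulr0.
Qed.

Lemma coll_ratio_shift x j d : 0 < \sum_l x l + d ->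
  coll_ratio (shift x j d) =
  (\sum_l x l ^+ 2 + 2 * d * x j + d ^+ 2) / (\sum_l x l + d) ^+ 2.
Proof. by move=> h; rewrite /coll_ratio sum_shift sum_sqr_shift h. Qed.

Lemma sum_moments x C1 C2 C3 :
  \sum_i (x i * C1 + x i ^+ 2 * C2 + x i ^+ 3 * C3)
  = (\sum_i x i) * C1 + (\sum_i x i ^+ 2) * C2 + (\sum_i x i ^+ 3) * C3.
Proof. by rewrite !big_split /= !mulr_suml. Qed.

Section Moments.
Variable x : 'I_k -> R.
Hypothesis x_ge0 : forall i, 0 <= x i.
Let b := \sum_i x i.
Let g := \sum_i x i ^+ 2.
Let c := \sum_i x i ^+ 3.

Lemma sqr_sum_sqr_le : g ^+ 2 <= b * c.
Proof.
have b_ge0 : 0 <= b by apply: sumr_ge0.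
have [b0|b_gt0] := eqVneq b 0.
  suff -> : g = 0 by rewrite b0 expr0n mul0r.
  have x0 := psumr_eq0P (fun i _ => x_ge0 i) b0.
  by apply: big1 => i _; rewrite x0 ?expr0n.
(* Cauchy--Schwarz in the form [0 <= sum_i x_i (x_i - g/b)^2]. *)
have : 0 <= \sum_i x i * (x i - g / b) ^+ 2.
  by apply: sumr_ge0 => i _; rewrite mulr_ge0 ?sqr_ge0.
have -> : \sum_i x i * (x i - g / b) ^+ 2 = (b * c - g ^+ 2) / b.
  transitivity (\sum_i (x i * (g / b) ^+ 2 + x i ^+ 2 * (- 2 * (g / b))
                        + x i ^+ 3 * 1)).
    by apply: eq_bigr => i _; ring.
  by rewrite sum_moments -/b -/g -/c; field.
by rewrite pmulr_lge0 ?invr_gt0 ?lt_def ?b_gt0 // subr_ge0.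
Qed.

Lemma adopt_drift : 0 < b ->
  \sum_j x j * (coll_ratio (shift x j 1) - coll_ratio x)
  = (b ^+ 2 - g) / (b * (b + 1) ^+ 2).
Proof.
move=> b_gt0.
have -> : coll_ratio x = g / b ^+ 2 by rewrite /coll_ratio -/b b_gt0.
transitivity (\sum_j (x j * ((g + 1) / (b + 1) ^+ 2 - g / b ^+ 2)
                      + x j ^+ 2 * (2 / (b + 1) ^+ 2) + x j ^+ 3 * 0)).
  by apply: eq_bigr => j _; rewrite coll_ratio_shift -/b -/g; [ring | lra].
by rewrite sum_moments -/b -/g; field; rewrite !gt_eqF //; lra.
Qed.

Lemma undecide_drift : 1 < b ->
  \sum_i x i * (b - x i) * (coll_ratio (shift x i (-1)) - coll_ratio x)
  = ((b ^+ 2 - g) * (g + 1) - 2 * b * g + 2 * c) / (b - 1) ^+ 2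
    - (b ^+ 2 - g) * g / b ^+ 2.
Proof.
move=> b_gt1.
have -> : coll_ratio x = g / b ^+ 2 by rewrite /coll_ratio -/b ifT //; lra.
transitivity (\sum_i (x i * (b * (g + 1) / (b - 1) ^+ 2 - b * g / b ^+ 2)
   + x i ^+ 2 * (- (g + 1) / (b - 1) ^+ 2 - 2 * b / (b - 1) ^+ 2 + g / b ^+ 2)
   + x i ^+ 3 * (2 / (b - 1) ^+ 2))).
  by apply: eq_bigr => i _; rewrite coll_ratio_shift -/b -/g; [ring | lra].
by rewrite sum_moments -/b -/g -/c; field; rewrite !gt_eqF //; lra.
Qed.

End Moments.

Lemma undecide_drift_ge b g c :
  2 <= b -> 0 <= g -> g <= b ^+ 2 / 2 -> g ^+ 2 <= b * c ->
  1 / 4 <= ((b ^+ 2 - g) * (g + 1) - 2 * b * g + 2 * c) / (b - 1) ^+ 2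
           - (b ^+ 2 - g) * g / b ^+ 2.
Proof.
move=> b_ge2 g_ge0 g_le cs.
set P := b ^+ 2 * ((b ^+ 2 - g) * (g + 1) - 2 * b * g + 2 * c)
         - (b - 1) ^+ 2 * (b ^+ 2 - g) * g.
have D_gt0 : 0 < b ^+ 2 * (b - 1) ^+ 2 by rewrite mulr_gt0 // exprn_gt0 //; lra.
have -> : ((b ^+ 2 - g) * (g + 1) - 2 * b * g + 2 * c) / (b - 1) ^+ 2
          - (b ^+ 2 - g) * g / b ^+ 2 = P / (b ^+ 2 * (b - 1) ^+ 2).
  by rewrite /P; field; rewrite !gt_eqF //; lra.
rewrite ler_pdivlMr // mul1r.
(* The bound comes from [b P = b (b^2 - g)^2 + 2 b^2 (b c - g^2)] and
   [b^2 - g >= b^2 / 2]. *)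
have P_ge : (b ^+ 2 - g) ^+ 2 <= P.
  rewrite -(ler_pM2l (_ : 0 < b)); last lra.
  have -> : b * P = b * (b ^+ 2 - g) ^+ 2 + 2 * b ^+ 2 * (b * c - g ^+ 2).
    by rewrite /P; ring.
  rewrite lerDl; apply: mulr_ge0; last by rewrite subr_ge0.
  by rewrite mulr_ge0 // sqr_ge0.
nra.
Qed.

End CollisionRatio.

Section UsdDrift.
Variables (R : realFieldType) (k : nat) (N : option 'I_k -> R).
Let x l := N (Some l).

Definition usd_counts (y : 'I_k -> R) (s1 s2 : option 'I_k) : 'I_k -> R :=
  fun l => y l - (s1 == Some l)%:R + (update s1 s2 == Some l)%:R.

Let drift s1 s2 := coll_ratio (usd_counts x s1 s2) - coll_ratio x.

Lemma drift_undecided_responder s1 : drift s1 None = 0.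
Proof.
rewrite /drift (@eq_coll_ratio _ _ _ x) ?subrr // => l.
by rewrite /usd_counts; case: s1 => [i|] /=; rewrite ?subrK // subr0 addr0.
Qed.

Lemma drift_adopt j : drift None (Some j) =
  coll_ratio (shift x j 1) - coll_ratio x.
Proof.
rewrite /drift (@eq_coll_ratio _ _ _ (shift x j 1)) // => l.
by rewrite /shift /usd_counts /= subr0 mul1r.
Qed.

Lemma drift_clash i j : drift (Some i) (Some j) =
  if i == j then 0 else coll_ratio (shift x i (-1)) - coll_ratio x.
Proof.
rewrite /drift; case: eqVneq => [<-|ne].
  rewrite (@eq_coll_ratio _ _ _ x) ?subrr // => l.
  by rewrite /usd_counts /= eqxx subrK.
congr (_ - _); apply: eq_coll_ratio => l.
by rewrite /shift /usd_counts /= (negbTE ne) addr0 mulN1r.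
Qed.

Lemma usd_drift :
  \sum_s1 \sum_s2 N s1 * N s2 * drift s1 s2
  = N None * \sum_j x j * (coll_ratio (shift x j 1) - coll_ratio x)
    + \sum_i x i * (\sum_l x l - x i)
               * (coll_ratio (shift x i (-1)) - coll_ratio x).
Proof.
rewrite big_option; congr (_ + _).
  rewrite big_option drift_undecided_responder mulr0 add0r mulr_sumr.
  by apply: eq_bigr => j _; rewrite drift_adopt mulrA.
apply: eq_bigr => i _.
rewrite big_option drift_undecided_responder mulr0 add0r.
rewrite (bigD1 i) //= drift_clash eqxx mulr0 add0r.
rewrite [\sum_l x l](bigD1 i) //= addrAC subrr add0r.
rewrite mulr_sumr mulr_suml; apply: eq_bigr => j ne.
by rewrite drift_clash eq_sym (negbTE ne).
Qed.

Hypothesis N_ge0 : forall s, 0 <= N s.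

Lemma usd_drift_ge :
  2 <= \sum_l x l -> \sum_l x l ^+ 2 <= (\sum_l x l) ^+ 2 / 2 ->
  1 / 4 <= \sum_s1 \sum_s2 N s1 * N s2 * drift s1 s2.
Proof.
move=> b_ge2 g_le; have x_ge0 l : 0 <= x l by exact: N_ge0.
have g_ge0 : 0 <= \sum_l x l ^+ 2 by apply: sumr_ge0 => l _; apply: sqr_ge0.
rewrite usd_drift adopt_drift ?undecide_drift //; try lra.
rewrite -[X in X <= _]add0r lerD ?undecide_drift_ge ?sqr_sum_sqr_le //.
rewrite mulr_ge0 ?N_ge0 // divr_ge0 ?subr_ge0 //; first lra.
by rewrite mulr_ge0 ?sqr_ge0 //; lra.
Qed.

End UsdDrift.

Section UsdProtocol.
Variables (R : realType) (n k : nat).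
Hypothesis n_gt0 : (0 < n)%N.
Implicit Type opn : config n k.

Lemma beta_counts opn : beta R opn = (\sum_l counts opn l) / n%:R.
Proof.
by rewrite /beta mulr_suml; apply: eq_bigr => l _; rewrite /alpha card_cnt.
Qed.

Lemma gamma_counts opn :
  gamma R opn = (\sum_l counts opn l ^+ 2) / n%:R ^+ 2.
Proof.
rewrite /gamma mulr_suml; apply: eq_bigr => l _.
by rewrite /alpha card_cnt expr_div_n.
Qed.

Lemma gtilde_counts opn : gtilde R opn = coll_ratio (counts opn).
Proof.
have n_pos : 0 < n%:R :> R by rewrite ltr0n.
rewrite /gtilde /coll_ratio beta_counts gamma_counts pmulr_lgt0 ?invr_gt0 //.
by case: ifP => // b_gt0; field; rewrite !gt_eqF.
Qed.

Lemma gtilde_usd_step opn u v :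
  gtilde R (usd_step opn u v)
  = coll_ratio (usd_counts (counts opn) (opn u) (opn v)).
Proof.
rewrite gtilde_counts; apply: eq_coll_ratio => l.
by rewrite /usd_counts /counts cnt_usd_step.
Qed.

Lemma cond_exp_next_gtilde opn :
  cond_exp_next (@gtilde R n k) opn = gtilde R opn + (n%:R ^+ 2)^-1 *
    \sum_s1 \sum_s2 cnt opn s1 * cnt opn s2 *
      (coll_ratio (usd_counts (counts opn) s1 s2) - coll_ratio (counts opn)).
Proof.
have n2_neq0 : n%:R ^+ 2 != 0 :> R by rewrite expf_neq0 // pnatr_eq0 -lt0n.
rewrite /cond_exp_next -[gtilde R opn](mulKf n2_neq0) -mulrDr; congr (_ * _).
under eq_bigr => u _ do under eq_bigr => v _ do rewrite gtilde_usd_step.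
rewrite (sum_config2_cnt opn
           (fun s1 s2 => coll_ratio (usd_counts (counts opn) s1 s2))).
rewrite gtilde_counts -(sum_cnt R opn) expr2 !mulr_suml -big_split /=.
apply: eq_bigr => s1 _; rewrite mulr_sumr mulr_suml -big_split /=.
by apply: eq_bigr => s2 _; rewrite -mulrDr addrC subrK.
Qed.

End UsdProtocol.

Lemma moment_bounds (R : realFieldType) (N b g : R) :
  5 <= N -> (1 / 2 - 1 / 20) * N <= b -> g <= 1 / 20 * N ^+ 2 ->
  2 <= b /\ g <= b ^+ 2 / 2.
Proof. by move=> N_ge5 b_ge g_le; split; nra. Qed.

Theorem mainTheorem15 (R : realType) :
  exists eps0 : R, 0 < eps0 /\
  exists n0 : nat,
    forall (n k : nat) (opn : config n k),
      (n0 <= n)%N ->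
      1 / 2 - eps0 <= beta R opn ->
      gamma R opn <= eps0 ->
      gtilde R opn + 1 / (12 * n%:R ^+ 2) <= cond_exp_next (@gtilde R n k) opn.
Proof.
exists (1 / 20); split; first lra.
exists 5%N => n k opn n_ge5 beta_ge gamma_le.
have n_gt0 : (0 < n)%N by apply: leq_trans n_ge5.
have n_ge5R : 5 <= n%:R :> R by rewrite (ler_nat R 5 n).
rewrite beta_counts // ler_pdivlMr ?ltr0n // in beta_ge.
rewrite gamma_counts // ler_pdivrMr ?exprn_gt0 ?ltr0n // in gamma_le.
have [b_ge2 g_le] := moment_bounds n_ge5R beta_ge gamma_le.
have drift_ge := usd_drift_ge (@cnt_ge0 R n k opn) b_ge2 g_le.
rewrite cond_exp_next_gtilde // lerD2l.
have n2_gt0 : 0 < n%:R ^+ 2 :> R by rewrite exprn_gt0 ?ltr0n.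
rewrite invfM mul1r mulrC ler_wpM2l ?invr_ge0 ?(ltW n2_gt0) //.
by apply: le_trans drift_ge; lra.
Qed.
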